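(* For $r>0$ let $\mathcal{A}_r\subset\mathbb{R}^2$ be the closed rectangle with vertices $(\pm\sqrt{e^{2r}-1},e^r)$ and $(\pm\sqrt{e^{2r}-1},e^{-r})$, and let $\mathcal{C}_r$ be the closed rectangle with vertices $(e^r,\pm\sqrt{e^{2r}-1})$ and $(e^{-r},\pm\sqrt{e^{2r}-1})$. Then for any $0<r<\log 1.01$ and any $\Lambda\in K_r$, we have $\Lambda_{\mathrm{pr}}\cap(\mathcal{A}_r\cup\mathcal{C}_r)\ne\varnothing$.
   Context: $X=\mathrm{SL}_2(\mathbb{R})/\mathrm{SL}_2(\mathbb{Z})$ is the space of unimodular lattices in $\mathbb{R}^2$. $\|\cdot\|$ is the supremum norm on $\mathbb{R}^2$. For $\Lambda\in X$ let $\Delta(\Lambda)=\sup_{v\in\Lambda\smallsetminus\{0\}}\log(1/\|v\|)$, and for $r\ge0$ let $K_r=\Delta^{-1}([0,r])$. $\Lambda_{\mathrm{pr}}$ denotes the set of primitive vectors of $\Lambda$. *)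

From Stdlib Require Import Reals ZArith.
Open Scope R_scope.

Definition vec := (R * R)%type.

Definition supnorm (v : vec) : R := Rmax (Rabs (fst v)) (Rabs (snd v)).

(* A unimodular lattice Lambda = g Z^2 with g = [[a, b], [c, d]] in SL_2(R);
   the lattice is the set of integer combinations of the columns (a,c), (b,d). *)
Definition in_SL2 (a b c d : R) : Prop := a * d - b * c = 1.

Definition in_lattice (a b c d : R) (v : vec) : Prop :=
  exists m n : Z, v = (IZR m * a + IZR n * b, IZR m * c + IZR n * d).

Definition is_primitive (a b c d : R) (v : vec) : Prop :=
  in_lattice a b c d v /\ v <> (0, 0) /\
  forall (w : vec) (k : Z), in_lattice a b c d w ->
    v = (IZR k * fst w, IZR k * snd w) -> (k = 1 \/ k = -1)%Z.

(* Lambda in K_r, i.e. Delta(Lambda) = sup_{v in Lambda \ 0} log(1/||v||) <= r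
   (written as: every term of the sup is <= r). *)
Definition in_K (r : R) (a b c d : R) : Prop :=
  forall v : vec, in_lattice a b c d v -> v <> (0, 0) -> ln (1 / supnorm v) <= r.

Definition rectA (r : R) (v : vec) : Prop :=
  - sqrt (exp (2 * r) - 1) <= fst v <= sqrt (exp (2 * r) - 1) /\
  exp (- r) <= snd v <= exp r.

Definition rectC (r : R) (v : vec) : Prop :=
  exp (- r) <= fst v <= exp r /\
  - sqrt (exp (2 * r) - 1) <= snd v <= sqrt (exp (2 * r) - 1).

(* A shortest vector v = (p, m) of the lattice (for the sup norm) is primitive, and Λ ∈ K_r
   gives m ≥ e^{-r}; by swapping coordinates and changing signs we may assume |p| ≤ m.
   Complete v to a basis (v, u) with m u_1 - p u_2 = 1 and reduce u modulo v so that
   |u_2| < m and p u_2 ≤ 0.  Minimality of v forces u_1 ≥ m, hence m² ≤ m u_1 ≤ 1 and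
   u_1 ≤ 1/m ≤ e^r.  If |p| ≤ √(e^{2r}-1) then v ∈ A_r.  Otherwise
   |p| |u_2| = 1 - m u_1 ≤ 1 - e^{-2r} ≤ e^{2r} - 1 forces |u_2| ≤ √(e^{2r}-1),
   so u ∈ C_r. *)

From Stdlib Require Import Reals ZArith Znumtheory Lra Lia List.
Open Scope R_scope.

Definition cross (u v : vec) : R := fst u * snd v - snd u * fst v.

Definition swap (v : vec) : vec := (snd v, fst v).

Lemma cross_swap u v : cross (swap u) (swap v) = - cross u v.
Proof. unfold cross, swap; simpl; ring. Qed.

Lemma supnorm_swap v : supnorm (swap v) = supnorm v.
Proof. apply Rmax_comm. Qed.

Lemma rectA_swap r v : rectA r (swap v) <-> rectC r v.
Proof. unfold rectA, rectC, swap; simpl; tauto. Qed.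

Lemma Rabs_fst_le_supnorm v : Rabs (fst v) <= supnorm v.
Proof. apply Rmax_l. Qed.

Lemma Rabs_snd_le_supnorm v : Rabs (snd v) <= supnorm v.
Proof. apply Rmax_r. Qed.

Lemma Rabs_le_bounds x a : Rabs x <= a -> - a <= x <= a.
Proof.
  intros H; pose proof (Rle_abs x); pose proof (Rle_abs (- x)).
  rewrite Rabs_Ropp in *; lra.
Qed.

Lemma supnorm_gt0 v : v <> (0, 0) -> 0 < supnorm v.
Proof.
  destruct v as [x y]; intros Hv.
  pose proof (Rabs_fst_le_supnorm (x, y)); pose proof (Rabs_snd_le_supnorm (x, y)).
  simpl in *.
  destruct (Req_dec x 0) as [->|Hx].
  - destruct (Req_dec y 0) as [->|Hy]; [contradiction|].
    pose proof (Rabs_pos_lt y Hy); lra.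
  - pose proof (Rabs_pos_lt x Hx); lra.
Qed.

Lemma supnorm_scale k v : supnorm (k * fst v, k * snd v) = Rabs k * supnorm v.
Proof. unfold supnorm; simpl; rewrite !Rabs_mult; apply RmaxRmult, Rabs_pos. Qed.

Lemma exists_shift_opposite_sign p y m : 0 < m ->
  exists k : Z, p * (y + IZR k * m) <= 0 /\ Rabs (y + IZR k * m) < m.
Proof.
  intros Hm.
  assert (Hdiv : forall t, exists k : Z, 0 <= t + IZR k * m < m).
  { intros t. destruct (euclidian_division t m) as [k [rem [Ht Hrem]]]; [lra|].
    rewrite Rabs_right in Hrem by lra.
    exists (- k)%Z. rewrite opp_IZR. lra. }
  destruct (Rle_or_lt p 0) as [Hp|Hp].
  - destruct (Hdiv y) as [k Hk]. exists k.
    rewrite Rabs_right by lra. split; [nra|lra].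
  - destruct (Hdiv (- y)) as [k Hk]. exists (- k)%Z.
    rewrite opp_IZR, Rabs_left1 by lra. split; [nra|lra].
Qed.

Lemma rectA_or_rectC r p m X Y : 0 < r -> exp (- r) <= m -> m <= X ->
  p * Y <= 0 -> m * X - p * Y = 1 -> rectA r (p, m) \/ rectC r (X, Y).
Proof.
  intros Hr Hm HX HpY Hdet.
  pose proof (exp_pos (- r)) as He0.
  assert (Hexp : exp (- r) * exp r = 1)
    by (rewrite exp_Ropp; field; apply Rgt_not_eq, exp_pos).
  assert (Hexp2 : exp (2 * r) = exp r * exp r)
    by (rewrite <- exp_plus; f_equal; ring).
  assert (Hr1 : 1 < exp r) by (rewrite <- exp_0; apply exp_increasing; lra).
  set (s := sqrt (exp (2 * r) - 1)).
  assert (Hs : 0 <= s) by apply sqrt_pos.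
  assert (Hs2 : s * s = exp (2 * r) - 1) by (apply sqrt_sqrt; nra).
  assert (Hm1 : m <= 1) by nra.
  destruct (Rle_or_lt (Rabs p) s) as [Hp|Hp].
  - left. unfold rectA; simpl; fold s.
    apply Rabs_le_bounds in Hp; lra.
  - right. unfold rectC; simpl; fold s.
    assert (HXe : X <= exp r) by nra.
    (* |p| |Y| = 1 - m X <= 1 - e^{-2r} <= e^{2r} - 1 = s^2, and |p| > s *)
    assert (HpY' : Rabs p * Rabs Y <= s * s).
    { rewrite <- Rabs_mult, Rabs_left1 by lra.
      assert ((exp r - exp (- r)) * (exp r - exp (- r)) >= 0) by nra.
      nra. }
    assert (HYs : Rabs Y <= s) by (pose proof (Rabs_pos Y); nra).
    apply Rabs_le_bounds in HYs; lra.
Qed.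

Definition is_shortest (L : vec -> Prop) (v : vec) : Prop :=
  L v /\ v <> (0, 0) /\ forall u, L u -> u <> (0, 0) -> supnorm v <= supnorm u.

Definition addZ_closed (L : vec -> Prop) : Prop :=
  forall u v (k : Z), L u -> L v -> L (fst u + IZR k * fst v, snd u + IZR k * snd v).

Section AddZClosed.

Variable L : vec -> Prop.
Hypothesis L_addZ : addZ_closed L.

Lemma L_opp u : L u -> L (- fst u, - snd u).
Proof.
  intros Hu.
  assert (H0 : L (0, 0)).
  { replace (0, 0) with (fst u + IZR (-1) * fst u, snd u + IZR (-1) * snd u)
      by (f_equal; simpl; ring).
    auto. }
  replace (- fst u, - snd u) with (fst (0, 0) + IZR (-1) * fst u, snd (0, 0) + IZR (-1) * snd u)
    by (f_equal; simpl; ring).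
  auto.
Qed.

Lemma reduced_partner p m w : 0 < m -> Rabs p <= m -> L (p, m) -> L w ->
  cross (p, m) w = -1 -> (forall u, L u -> u <> (0, 0) -> m <= supnorm u) ->
  exists u, L u /\ cross (p, m) u = -1 /\ m <= fst u /\ p * snd u <= 0.
Proof.
  intros Hm Hp Hv Hw Hcross Hmin.
  destruct (exists_shift_opposite_sign p (snd w) m Hm) as [k [Hsign Hsmall]].
  set (u := (fst w + IZR k * p, snd w + IZR k * m)).
  assert (Hu : L u) by exact (L_addZ w (p, m) k Hw Hv).
  assert (Hcu : m * fst u - p * snd u = 1).
  { transitivity (- cross (p, m) w); [unfold cross, u; simpl; ring|lra]. }
  change (snd w + IZR k * m) with (snd u) in Hsign, Hsmall; clearbody u.
  exists u; split; [exact Hu|]; split; [unfold cross; simpl; lra|].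
  split; [|exact Hsign].
  assert (Hu0 : u <> (0, 0)) by (intros E; rewrite E in Hcu; simpl in Hcu; lra).
  pose proof (Hmin u Hu Hu0) as Hmu; unfold supnorm in Hmu.
  assert (HX : m <= Rabs (fst u)).
  { destruct (Rle_dec (Rabs (fst u)) (Rabs (snd u))) as [Hle|Hlt].
    - rewrite Rmax_right in Hmu by exact Hle; lra.
    - rewrite Rmax_left in Hmu by lra; exact Hmu. }
  (* u_1 <= -m would give m u_1 - p u_2 <= -m^2 + |p| |u_2| < 0 *)
  assert (Hpu : Rabs (p * snd u) < m * m)
    by (rewrite Rabs_mult; pose proof (Rabs_pos p); pose proof (Rabs_pos (snd u)); nra).
  pose proof (Rle_abs (- (p * snd u))); rewrite Rabs_Ropp in *.
  destruct (Rle_or_lt 0 (fst u)) as [H0|H0].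
  - rewrite Rabs_right in HX by lra; exact HX.
  - rewrite Rabs_left in HX by lra; nra.
Qed.

Lemma rect_vector_of_upright_shortest r p m w : 0 < r -> exp (- r) <= m ->
  Rabs p <= m -> L (p, m) -> L w -> cross (p, m) w = -1 ->
  (forall u, L u -> u <> (0, 0) -> m <= supnorm u) ->
  exists v v', L v /\ L v' /\ Rabs (cross v v') = 1 /\ (rectA r v \/ rectC r v).
Proof.
  intros Hr Hm Hp Hv Hw Hcross Hmin.
  assert (Hm0 : 0 < m) by (pose proof (exp_pos (- r)); lra).
  destruct (reduced_partner p m w Hm0 Hp Hv Hw Hcross Hmin) as [u [Hu [Hcu [HX HY]]]].
  destruct u as [X Y]; simpl in HX, HY.
  assert (Hdet : m * X - p * Y = 1) by (unfold cross in Hcu; simpl in Hcu; lra).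
  destruct (rectA_or_rectC r p m X Y Hr Hm HX HY Hdet) as [HA|HC].
  - exists (p, m), (X, Y); rewrite Hcu, Rabs_left by lra.
    repeat split; auto; lra.
  - exists (X, Y), (p, m); unfold cross; simpl.
    replace (X * m - Y * p) with 1 by lra; rewrite Rabs_R1; auto.
Qed.

Lemma oriented_partner v w : L w -> Rabs (cross v w) = 1 ->
  exists w', L w' /\ cross v w' = -1.
Proof.
  intros Hw Hcross.
  destruct (Rle_or_lt 0 (cross v w)) as [H|H].
  - exists (- fst w, - snd w); split; [exact (L_opp w Hw)|].
    rewrite Rabs_right in Hcross by lra; unfold cross in *; simpl; lra.
  - exists w; split; [exact Hw|]. rewrite Rabs_left in Hcross; lra.
Qed.

Lemma rect_vector_of_steep_shortest r v w : 0 < r -> is_shortest L v ->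
  exp (- r) <= supnorm v -> Rabs (fst v) <= Rabs (snd v) -> L w -> Rabs (cross v w) = 1 ->
  exists v v', L v /\ L v' /\ Rabs (cross v v') = 1 /\ (rectA r v \/ rectC r v).
Proof.
  intros Hr [Hv [_ Hmin]] Hm Hsteep Hw Hcross.
  destruct v as [p y]; simpl in Hsteep.
  assert (Hnorm : supnorm (p, y) = Rabs y) by exact (Rmax_right _ _ Hsteep).
  rewrite Hnorm in Hm, Hmin.
  destruct (Rle_or_lt 0 y) as [Hy|Hy].
  - rewrite (Rabs_right y) in Hm, Hmin, Hsteep by lra.
    destruct (oriented_partner (p, y) w Hw Hcross) as [w' [Hw' Hc']].
    exact (rect_vector_of_upright_shortest r p y w' Hr Hm Hsteep Hv Hw' Hc' Hmin).
  - rewrite (Rabs_left y) in Hm, Hmin, Hsteep by lra.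
    rewrite <- Rabs_Ropp in Hsteep.
    assert (Hcross' : Rabs (cross (- p, - y) w) = 1).
    { rewrite <- Hcross, <- Rabs_Ropp; f_equal; unfold cross; simpl; ring. }
    destruct (oriented_partner (- p, - y) w Hw Hcross') as [w' [Hw' Hc']].
    exact (rect_vector_of_upright_shortest r (- p) (- y) w' Hr Hm Hsteep
             (L_opp (p, y) Hv) Hw' Hc' Hmin).
Qed.

End AddZClosed.

Lemma rect_vector_of_shortest (L : vec -> Prop) r v w : addZ_closed L ->
  0 < r -> is_shortest L v -> exp (- r) <= supnorm v -> L w -> Rabs (cross v w) = 1 ->
  exists v v', L v /\ L v' /\ Rabs (cross v v') = 1 /\ (rectA r v \/ rectC r v).
Proof.
  intros L_addZ Hr Hv Hm Hw Hcross.
  destruct (Rle_or_lt (Rabs (fst v)) (Rabs (snd v))) as [Hsteep|Hflat].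
  { exact (rect_vector_of_steep_shortest L L_addZ r v w Hr Hv Hm Hsteep Hw Hcross). }
  set (Ls := fun u => L (swap u)).
  destruct v as [x y], w as [x' y'], Hv as [Hv [Hv0 Hmin]].
  assert (Hvs : is_shortest Ls (y, x)).
  { split; [exact Hv|split; [congruence|]].
    intros [s t] Hu Hu0.
    rewrite <- (supnorm_swap (s, t)), <- (supnorm_swap (y, x)).
    apply (Hmin _ Hu); unfold swap; simpl; congruence. }
  assert (Hcs : Rabs (cross (y, x) (y', x')) = 1)
    by (rewrite <- Hcross, <- Rabs_Ropp; f_equal; unfold cross; simpl; ring).
  rewrite <- supnorm_swap in Hm; simpl in Hflat.
  destruct (rect_vector_of_steep_shortest Ls (fun u v k => L_addZ (swap u) (swap v) k)
              r (y, x) (y', x') Hr Hvs Hm ltac:(simpl; lra) Hw Hcs)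
    as [u [u' [Hu [Hu' [Hc Hrect]]]]].
  exists (swap u), (swap u'); split; [exact Hu|split; [exact Hu'|split]].
  - rewrite cross_swap, Rabs_Ropp; exact Hc.
  - destruct u as [s t].
    pose proof (rectA_swap r (s, t)); pose proof (rectA_swap r (t, s)).
    unfold swap in *; simpl in *; tauto.
Qed.

Lemma exists_argmin_list {A : Type} (f : A -> R) (l : list A) : l <> nil ->
  exists x, In x l /\ forall y, In y l -> f x <= f y.
Proof.
  induction l as [|h t IH]; intros Hl; [easy|].
  destruct t as [|h' t].
  - exists h; split; [now left|]. intros y [<-|[]]; lra.
  - destruct IH as [x [Hx Hmin]]; [easy|].
    destruct (Rle_or_lt (f h) (f x)).
    + exists h; split; [now left|].
      intros y [<-|Hy]; [lra|specialize (Hmin y Hy); lra].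
    + exists x; split; [now right|].
      intros y [<-|Hy]; [lra|auto].
Qed.

Definition Zrange (N : Z) : list Z :=
  map (fun k => Z.of_nat k - N)%Z (seq 0 (Z.to_nat (2 * N + 1))).

Lemma in_Zrange N z : (Z.abs z <= N)%Z -> In z (Zrange N).
Proof.
  intros Hz; apply in_map_iff; exists (Z.to_nat (z + N)).
  split; [lia|apply in_seq; lia].
Qed.

Definition lattice_point (a b c d : R) (m n : Z) : vec :=
  (IZR m * a + IZR n * b, IZR m * c + IZR n * d).

Section Lattice.

Variables a b c d : R.
Notation det := (a * d - b * c).
Notation L := (in_lattice a b c d).
Notation lp := (lattice_point a b c d).
Hypothesis det_neq0 : det <> 0.

Lemma in_lattice_addZ : addZ_closed L.
Proof.
  intros u v k [m [n ->]] [p [q ->]]; simpl.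
  exists (m + k * p)%Z, (n + k * q)%Z; rewrite !plus_IZR, !mult_IZR; f_equal; ring.
Qed.

Lemma cross_lattice_point m n p q :
  cross (lp m n) (lp p q) = IZR (m * q - n * p) * det.
Proof. unfold cross, lattice_point; simpl; rewrite minus_IZR, !mult_IZR; ring. Qed.

Lemma is_primitive_of_cross u w : L u -> L w ->
  Rabs (cross u w) = Rabs det -> is_primitive a b c d u.
Proof.
  intros Hu Hw Hcross.
  split; [exact Hu|split].
  - intros ->; unfold cross in Hcross; simpl in Hcross.
    replace (0 * snd w - 0 * fst w) with 0 in Hcross by ring.
    rewrite Rabs_R0 in Hcross; exact (Rabs_no_R0 _ det_neq0 (eq_sym Hcross)).
  - intros w' k [m [n Hw']] Hk; destruct Hw as [p [q Hw]].
    change (w = lp p q) in Hw; change (w' = lp m n) in Hw'; subst w.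
    assert (Hc : cross u (lp p q) = IZR (k * (m * q - n * p)) * det).
    { rewrite Hk, Hw', mult_IZR, Rmult_assoc, <- cross_lattice_point.
      unfold cross; simpl; ring. }
    rewrite Hc, Rabs_mult in Hcross.
    assert (Habs : Rabs (IZR (k * (m * q - n * p))) = 1).
    { apply (Rmult_eq_reg_r (Rabs det)); [lra|apply Rabs_no_R0, det_neq0]. }
    rewrite <- abs_IZR in Habs; apply eq_IZR in Habs.
    rewrite Z.abs_mul in Habs.
    apply Z.eq_mul_1_nonneg in Habs; [lia|apply Z.abs_nonneg].
Qed.

Lemma coeff_bound m n :
  Rabs (IZR m) * Rabs det <= (Rabs b + Rabs d) * supnorm (lp m n) /\
  Rabs (IZR n) * Rabs det <= (Rabs a + Rabs c) * supnorm (lp m n).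
Proof.
  pose proof (Rabs_fst_le_supnorm (lp m n)) as HX.
  pose proof (Rabs_snd_le_supnorm (lp m n)) as HY.
  set (S := supnorm (lp m n)) in *.
  unfold lattice_point in HX, HY; simpl in HX, HY.
  set (X := IZR m * a + IZR n * b) in *; set (Y := IZR m * c + IZR n * d) in *.
  assert (Hm : IZR m * det = d * X - b * Y) by (unfold X, Y; ring).
  assert (Hn : IZR n * det = a * Y - c * X) by (unfold X, Y; ring).
  rewrite <- !Rabs_mult, Hm, Hn.
  pose proof (Rabs_pos a); pose proof (Rabs_pos b).
  pose proof (Rabs_pos c); pose proof (Rabs_pos d).
  split; unfold Rminus; eapply Rle_trans; try apply Rabs_triang;
    rewrite Rabs_Ropp, !Rabs_mult; nra.
Qed.

Lemma lattice_point_neq0 m n : (m, n) <> (0%Z, 0%Z) -> lp m n <> (0, 0).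
Proof.
  intros Hmn E.
  destruct (coeff_bound m n) as [Hm Hn]; rewrite E in Hm, Hn.
  unfold supnorm in Hm, Hn; simpl in Hm, Hn; rewrite Rabs_R0, Rmax_left, Rmult_0_r in Hm, Hn by lra.
  assert (Hzero : forall z : Z, Rabs (IZR z) * Rabs det <= 0 -> z = 0%Z).
  { intros z Hz; apply eq_IZR_R0; destruct (Req_dec (IZR z) 0) as [|Hz0]; [easy|].
    pose proof (Rabs_pos_lt _ Hz0); pose proof (Rabs_pos_lt _ det_neq0); nra. }
  apply Hmn; f_equal; apply Hzero; assumption.
Qed.

Lemma shortest_coprime m n : is_shortest L (lp m n) -> Z.gcd m n = 1%Z.
Proof.
  intros [_ [Hv0 Hmin]].
  assert (Hg0 : Z.gcd m n <> 0%Z).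
  { intros E; apply Z.gcd_eq_0 in E; destruct E as [-> ->].
    apply Hv0; unfold lattice_point; f_equal; ring. }
  destruct (Z.gcd_divide_l m n) as [m' Hm'], (Z.gcd_divide_r m n) as [n' Hn'].
  pose proof (Z.gcd_nonneg m n) as Hg.
  set (g := Z.gcd m n) in *.
  assert (Hscale : lp m n = (IZR g * fst (lp m' n'), IZR g * snd (lp m' n'))).
  { rewrite Hm', Hn'; unfold lattice_point; simpl; rewrite !mult_IZR; f_equal; ring. }
  assert (Hv'0 : lp m' n' <> (0, 0)).
  { intros E; apply Hv0; rewrite Hscale, E; simpl; f_equal; ring. }
  pose proof (Hmin (lp m' n') (ex_intro _ m' (ex_intro _ n' eq_refl)) Hv'0) as Hle.
  rewrite Hscale, supnorm_scale, Rabs_right in Hle by (apply Rle_ge, IZR_le; lia).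
  pose proof (supnorm_gt0 _ Hv'0).
  assert (Hg1 : IZR g <= 1) by nra.
  apply le_IZR in Hg1; lia.
Qed.

Lemma shortest_partner v : is_shortest L v -> exists w, L w /\ cross v w = det.
Proof.
  intros Hv; destruct (proj1 Hv) as [m [n Hmn]]; change (v = lp m n) in Hmn; subst v.
  destruct (Zis_gcd_bezout m n 1) as [u v Huv].
  { rewrite <- (shortest_coprime m n Hv); apply Zgcd_is_gcd. }
  exists (lp (- v) u); split; [exists (- v)%Z, u; reflexivity|].
  rewrite cross_lattice_point.
  replace (m * u - n * - v)%Z with 1%Z by lia; ring.
Qed.

Lemma lattice_point_in_box B m n : supnorm (lp m n) <= B ->
  let N := up ((Rabs a + Rabs b + Rabs c + Rabs d) * B / Rabs det) in
  (Z.abs m <= N)%Z /\ (Z.abs n <= N)%Z.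
Proof.
  intros HB N.
  destruct (coeff_bound m n) as [Hm Hn].
  pose proof (Rabs_pos_lt _ det_neq0) as Hdet.
  assert (HS : 0 <= supnorm (lp m n))
    by (eapply Rle_trans; [apply Rabs_pos|apply Rabs_fst_le_supnorm]).
  assert (Hup : forall z : Z, Rabs (IZR z) * Rabs det <=
                  (Rabs a + Rabs b + Rabs c + Rabs d) * B -> (Z.abs z <= N)%Z).
  { intros z Hz. destruct (archimed ((Rabs a + Rabs b + Rabs c + Rabs d) * B / Rabs det)) as [HN _].
    fold N in HN.
    assert (Rabs (IZR z) <= (Rabs a + Rabs b + Rabs c + Rabs d) * B / Rabs det).
    { apply (Rmult_le_reg_r (Rabs det)); [lra|]. unfold Rdiv.
      rewrite Rmult_assoc, Rinv_l by lra. lra. }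
    rewrite <- abs_IZR in *. apply Z.lt_le_incl, lt_IZR; lra. }
  pose proof (Rabs_pos a); pose proof (Rabs_pos b).
  pose proof (Rabs_pos c); pose proof (Rabs_pos d).
  split; apply Hup; nra.
Qed.

Lemma exists_shortest : exists v, is_shortest L v.
Proof.
  set (B := supnorm (lp 1 0)).
  set (N := up ((Rabs a + Rabs b + Rabs c + Rabs d) * B / Rabs det)).
  set (box := filter (fun z => negb (andb (fst z =? 0)%Z (snd z =? 0)%Z))
                     (list_prod (Zrange N) (Zrange N))).
  set (f := fun z : Z * Z => supnorm (lp (fst z) (snd z))).
  assert (Hbox : forall m n, (m, n) <> (0%Z, 0%Z) -> f (m, n) <= B -> In (m, n) box).
  { intros m n Hmn HB; apply filter_In; split.
    - destruct (lattice_point_in_box B m n HB) as [Hm Hn].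
      apply in_prod; apply in_Zrange; assumption.
    - simpl; destruct (Z.eqb_spec m 0), (Z.eqb_spec n 0); subst; easy. }
  assert (H10 : In (1%Z, 0%Z) box) by (apply Hbox; [easy|apply Rle_refl]).
  destruct (exists_argmin_list f box) as [[m0 n0] [Hin Hmin]]; [intros E; rewrite E in H10; easy|].
  assert (Hmn0 : (m0, n0) <> (0%Z, 0%Z)).
  { apply filter_In in Hin; destruct Hin as [_ Hin].
    intros E; injection E as -> ->; easy. }
  exists (lp m0 n0); split; [exists m0, n0; reflexivity|split].
  - exact (lattice_point_neq0 m0 n0 Hmn0).
  - intros u [m [n Hu]] Hu0; change (u = lp m n) in Hu; subst u.
    assert (Hmn : (m, n) <> (0%Z, 0%Z)).
    { intros E; injection E as -> ->; apply Hu0; unfold lattice_point; f_equal; ring. }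
    change (f (m0, n0) <= f (m, n)).
    destruct (Rle_or_lt (f (m, n)) B) as [HB|HB].
    + exact (Hmin _ (Hbox m n Hmn HB)).
    + specialize (Hmin _ H10); unfold f in Hmin at 2; simpl in Hmin; fold B in Hmin; lra.
Qed.

End Lattice.

Lemma in_K_supnorm_ge r a b c d v : in_K r a b c d -> in_lattice a b c d v ->
  v <> (0, 0) -> exp (- r) <= supnorm v.
Proof.
  intros HK Hv Hv0.
  pose proof (HK v Hv Hv0) as Hln; pose proof (supnorm_gt0 v Hv0) as Hs.
  unfold Rdiv in Hln; rewrite Rmult_1_l, ln_Rinv in Hln by exact Hs.
  rewrite <- (exp_ln (supnorm v)) by exact Hs.
  destruct (Req_dec (ln (supnorm v)) (- r)) as [->|Hne]; [lra|].
  left; apply exp_increasing; lra.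
Qed.

Theorem lemma3p1 (r : R) (a b c d : R) :
  0 < r -> r < ln (101 / 100) ->
  in_SL2 a b c d -> in_K r a b c d ->
  exists v : vec, is_primitive a b c d v /\ (rectA r v \/ rectC r v).
Proof.
  intros Hr _ Hdet HK; unfold in_SL2 in Hdet.
  assert (Hdet0 : a * d - b * c <> 0) by lra.
  destruct (exists_shortest a b c d Hdet0) as [v Hv].
  destruct (shortest_partner a b c d v Hv) as [w [Hw Hvw]].
  pose proof (in_K_supnorm_ge r a b c d v HK (proj1 Hv) (proj1 (proj2 Hv))) as Hm.
  destruct (rect_vector_of_shortest (in_lattice a b c d) r v w (in_lattice_addZ a b c d)
              Hr Hv Hm Hw) as [u [u' [Hu [Hu' [Huu' Hrect]]]]].
  { rewrite Hvw, Hdet; apply Rabs_R1. }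
  exists u; split; [|exact Hrect].
  apply (is_primitive_of_cross a b c d Hdet0 u u' Hu Hu').
  rewrite Huu', Hdet, Rabs_R1; reflexivity.
Qed.
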